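(* Let $(X,\pi)$ be a finite symmetric two-player game with relative payoff game $(X,\Delta)$. If $(X,\Delta)$ is a generalized ordinal potential game, then imitation is not subject to a money pump.
   Context: $\pi(x,y)$ is the payoff of the player choosing $x$ against $y$; $\Delta(x,y)=\pi(x,y)-\pi(y,x)$. The symmetric game $(X,\Delta)$ is a generalized ordinal potential game if there is $P:X\times X\to\mathbb{R}$ such that for all $y,x,x'\in X$: $\Delta(x,y)-\Delta(x',y)>0$ implies $P(x,y)-P(x',y)>0$, and $\Delta(x,y)-\Delta(x',y)>0$ implies $P(y,x)-P(y,x')>0$. Imitate-the-best: given initial $y_0\in X$ and any opponent sequence $(x_t)_{t\ge0}$, $y_t=x_{t-1}$ if $\Delta(x_{t-1},y_{t-1})>0$ and $y_t=y_{t-1}$ otherwise. Imitation is not subject to a money pump if there is $M\in\mathbb{R}_+$ such that for every $y_0\in X$ and every sequence $(x_t)$, $\limsup_{T\to\infty}\sum_{t=0}^T\Delta(x_t,y_t)\le M$. *)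

From Stdlib Require Import Reals List.
From Coquelicot Require Import Coquelicot.
Open Scope R_scope.

Definition rel_payoff {X : Type} (pi : X -> X -> R) (x y : X) : R :=
  pi x y - pi y x.

Definition finite_type (X : Type) : Prop :=
  exists l : list X, forall x : X, In x l.

Definition gen_ordinal_potential {X : Type} (Delta : X -> X -> R) : Prop :=
  exists P : X -> X -> R,
    forall y x x' : X,
      (Delta x y - Delta x' y > 0 -> P x y - P x' y > 0) /\
      (Delta x y - Delta x' y > 0 -> P y x - P y x' > 0).

Fixpoint imitate {X : Type} (Delta : X -> X -> R) (y0 : X) (xs : nat -> X)
    (t : nat) : X :=
  match t with
  | O => y0
  | S t' =>
      let y' := imitate Delta y0 xs t' in
      if Rlt_dec 0 (Delta (xs t') y') then xs t' else y'
  end.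

Definition pump_sum {X : Type} (Delta : X -> X -> R) (y0 : X) (xs : nat -> X)
    (T : nat) : R :=
  sum_f_R0 (fun t => Delta (xs t) (imitate Delta y0 xs t)) T.

Definition no_money_pump {X : Type} (Delta : X -> X -> R) : Prop :=
  exists M : R, 0 <= M /\
    forall (y0 : X) (xs : nat -> X),
      Rbar_le (LimSup_seq (pump_sum Delta y0 xs)) (Finite M).

(* Imitation only switches to a strategy that beats the current one, and the
   potential P turns this into a strict increase of V x := P x x.  Hence the
   number of strategies lying strictly below the current one in V grows by at
   least one at every switch; it never exceeds |X|.  A switch gains at most
   B := max Delta and keeping the current strategy gains at most 0, so every
   partial sum of the pump is at most B |X|. *)

From Stdlib Require Import Reals List Lra Lia.
From Coquelicot Require Import Coquelicot.
Open Scope R_scope.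

Lemma list_bounded {A : Type} (f : A -> R) (l : list A) :
  exists B, 0 <= B /\ forall a, In a l -> f a <= B.
Proof.
  induction l as [|a l [B [HB0 HB]]].
  - exists 0; split; [lra | intros a []].
  - exists (Rmax (f a) B); split.
    + eapply Rle_trans; [exact HB0 | apply Rmax_r].
    + intros b [<- | Hb]; [apply Rmax_l |].
      eapply Rle_trans; [apply HB, Hb | apply Rmax_r].
Qed.

Lemma finite_bounded2 {X : Type} (f : X -> X -> R) :
  finite_type X -> exists B, 0 <= B /\ forall x y, f x y <= B.
Proof.
  intros [l Hl].
  destruct (list_bounded (fun p => f (fst p) (snd p)) (list_prod l l))
    as [B [HB0 HB]].
  exists B; split; [exact HB0 |].
  intros x y; apply (HB (x, y)), in_prod; apply Hl.
Qed.

Lemma LimSup_seq_le_bound (u : nat -> R) (M : R) :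
  (forall n, u n <= M) -> Rbar_le (LimSup_seq u) M.
Proof.
  intros Hu; rewrite <- (LimSup_seq_const M).
  apply LimSup_le; exists O; intros n _; apply Hu.
Qed.

Section Rank.
Context {X : Type} (V : X -> R).

Definition rank_below (l : list X) (x : X) : nat :=
  length (filter (fun z => if Rlt_dec (V z) (V x) then true else false) l).

Lemma rank_below_le_length l x : (rank_below l x <= length l)%nat.
Proof.
  unfold rank_below; induction l as [|a l IH]; simpl; [lia |].
  destruct (Rlt_dec (V a) (V x)); simpl; lia.
Qed.

Lemma rank_below_le l x y : V y < V x -> (rank_below l y <= rank_below l x)%nat.
Proof.
  intros Hyx; unfold rank_below; induction l as [|a l IH]; simpl; [lia |].
  destruct (Rlt_dec (V a) (V y)), (Rlt_dec (V a) (V x)); simpl; try lia; lra.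
Qed.

Lemma rank_below_lt l x y :
  V y < V x -> In y l -> (rank_below l y < rank_below l x)%nat.
Proof.
  intros Hyx Hy; induction l as [|a l IH]; [contradiction |].
  pose proof (rank_below_le l x y Hyx) as Hle.
  unfold rank_below in *; simpl.
  destruct Hy as [<- | Hy].
  - destruct (Rlt_dec (V a) (V a)), (Rlt_dec (V a) (V x)); simpl; try lia; lra.
  - specialize (IH Hy).
    destruct (Rlt_dec (V a) (V y)), (Rlt_dec (V a) (V x)); simpl; try lia; lra.
Qed.

End Rank.

Lemma skew_potential_increasing {X : Type} (Delta : X -> X -> R) :
  (forall x y, Delta x y = - Delta y x) ->
  gen_ordinal_potential Delta ->
  exists V : X -> R, forall x y, Delta x y > 0 -> V y < V x.
Proof.
  intros Hskew [P HP].
  exists (fun x => P x x); intros x y Hxy.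
  assert (Hdiag : forall z, Delta z z = 0)
    by (intros z; pose proof (Hskew z z); lra).
  assert (Hyx : P y x - P y y > 0).
  { apply (proj2 (HP y x y)); rewrite Hdiag; lra. }
  assert (Hxx : P x x - P y x > 0).
  { apply (proj1 (HP x x y)); rewrite Hdiag, (Hskew y x); lra. }
  lra.
Qed.

Section Imitation.
Context {X : Type} (Delta : X -> X -> R) (V : X -> R) (l : list X) (B : R).
Hypothesis Delta_increasing : forall x y, Delta x y > 0 -> V y < V x.
Hypothesis l_covers : forall x, In x l.
Hypothesis B_nonneg : 0 <= B.
Hypothesis Delta_le_B : forall x y, Delta x y <= B.

Let rank_at (y0 : X) (xs : nat -> X) (t : nat) : R :=
  INR (rank_below V l (imitate Delta y0 xs t)).

Lemma imitate_gain_le_rank_step y0 xs t :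
  Delta (xs t) (imitate Delta y0 xs t)
    <= B * (rank_at y0 xs (S t) - rank_at y0 xs t).
Proof.
  unfold rank_at; simpl.
  destruct (Rlt_dec 0 (Delta (xs t) (imitate Delta y0 xs t))) as [Hgain | Hno].
  - pose proof (rank_below_lt V l _ _
      (Delta_increasing _ _ Hgain) (l_covers _)) as Hrank.
    apply le_INR in Hrank; rewrite S_INR in Hrank.
    pose proof (Delta_le_B (xs t) (imitate Delta y0 xs t)).
    apply Rle_trans with (B * 1); [lra |].
    apply Rmult_le_compat_l; lra.
  - rewrite Rminus_diag, Rmult_0_r; lra.
Qed.

Lemma pump_sum_le_rank_gain y0 xs T :
  pump_sum Delta y0 xs T <= B * (rank_at y0 xs (S T) - rank_at y0 xs O).
Proof.
  induction T as [|T IH].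
  - apply imitate_gain_le_rank_step.
  - change (pump_sum Delta y0 xs (S T)) with
      (pump_sum Delta y0 xs T + Delta (xs (S T)) (imitate Delta y0 xs (S T))).
    pose proof (imitate_gain_le_rank_step y0 xs (S T)).
    lra.
Qed.

Lemma pump_sum_bounded y0 xs T :
  pump_sum Delta y0 xs T <= B * INR (length l).
Proof.
  eapply Rle_trans; [apply pump_sum_le_rank_gain |].
  apply Rmult_le_compat_l; [exact B_nonneg |].
  unfold rank_at.
  pose proof (le_INR _ _ (rank_below_le_length V l (imitate Delta y0 xs (S T)))).
  pose proof (pos_INR (rank_below V l (imitate Delta y0 xs O))).
  lra.
Qed.

End Imitation.

Theorem proposition4 (X : Type) (pi : X -> X -> R) :
  finite_type X ->
  gen_ordinal_potential (rel_payoff pi) ->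
  no_money_pump (rel_payoff pi).
Proof.
  intros Hfin Hpot.
  assert (Hskew : forall x y, rel_payoff pi x y = - rel_payoff pi y x)
    by (intros; unfold rel_payoff; ring).
  destruct (skew_potential_increasing _ Hskew Hpot) as [V HV].
  destruct (finite_bounded2 (rel_payoff pi) Hfin) as [B [HB0 HB]].
  destruct Hfin as [l Hl].
  exists (B * INR (length l)); split.
  - apply Rmult_le_pos; [exact HB0 | apply pos_INR].
  - intros y0 xs; apply LimSup_seq_le_bound; intros T.
    exact (pump_sum_bounded _ V l B HV Hl HB0 HB y0 xs T).
Qed.
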